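(* Let $n\ge1$, $m\ge2$, and let $\sigma_0,\dots,\sigma_m$ be the Coxeter generators of the affine Weyl group $\tilde C_m$. (1) Setting $\sigma_i(v)=s_i(v)$ for each vertex $v$ of $Y_{n,m}$ and $0\le i\le m$, and extending multiplicatively, gives a well-defined action of $\tilde C_m$ on the vertex set of $Y_{n,m}$. (2) $Y_{n,m}$ is the Schreier graph of $\tilde C_m$ with respect to the generating set $\{\sigma_0,\dots,\sigma_m\}$ and this action.
   Context: The Yoke graph $Y_{n,m}$ has vertices the tuples $v=(v_0,\dots,v_{m+1})$ with $v_0,v_{m+1}\in\mathbb{Z}_n$, $v_1,\dots,v_m\in\{0,1\}$, $\sum v_i\equiv0\pmod n$; $u\sim v$ iff there is $0\le i\le m$ with $u_j=v_j$ for $j\notin\{i,i+1\}$ and either ($u_i=v_i+1$, $u_{i+1}=v_{i+1}-1$) or ($u_i=v_i-1$, $u_{i+1}=v_{i+1}+1$), bucket entries mod $n$. For $0\le i\le m$, $\overleftarrow{s}_i(v)$ replaces $v_i,v_{i+1}$ by $v_i+1,v_{i+1}-1$, and $\overrightarrow{s}_i(v)$ by $v_i-1,v_{i+1}+1$. Define $s_0(v)=\overleftarrow{s}_0(v)$ if $v_1=1$, $\overrightarrow{s}_0(v)$ if $v_1=0$; $s_m(v)=\overleftarrow{s}_m(v)$ if $v_m=0$, $\overrightarrow{s}_m(v)$ if $v_m=1$; for $1\le i\le m-1$, $s_i$ swaps $v_i$ and $v_{i+1}$. $\tilde C_m$ is the group generated by $\sigma_0,\dots,\sigma_m$ with relations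 $\sigma_i^2=1$, $(\sigma_i\sigma_j)^2=1$ for $|i-j|>1$, $(\sigma_i\sigma_{i+1})^3=1$ for $1\le i\le m-2$, $(\sigma_0\sigma_1)^4=(\sigma_{m-1}\sigma_m)^4=1$. The Schreier graph of a group acting on a set $V$ with respect to a symmetric generating set $S$ is the (simple) graph on $V$ in which $x$ and $y\ne x$ are adjacent iff $y=s(x)$ for some $s\in S$. *)

From mathcomp Require Import all_boot all_order all_algebra.
Set Implicit Arguments. Unset Strict Implicit. Unset Printing Implicit Defensive.
Import Order.TTheory GRing.Theory Num.Theory.
Local Open Scope ring_scope.

(* A vertex of Y_{n,m} is represented by the list [v_0; v_1; ...; v_{m+1}]
   of integers, the bucket entries v_0, v_{m+1} being canonical
   representatives in [0, n) of Z_n. *)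

Definition ent (v : seq int) (k : nat) : int := nth 0 v k.

Definition is_bucket (m k : nat) : bool := (k == 0)%N || (k == m.+1)%N.

Definition yoke_vertex (n m : nat) (v : seq int) : bool :=
  [&& size v == m.+2,
      [forall j : 'I_(m.+2),
         if is_bucket m j then (0 <= ent v j) && (ent v j < n%:Z)
         else (ent v j == 0) || (ent v j == 1)]
    & (n%:Z %| \sum_(j < m.+2) ent v j)%Z].

Definition eq_ent (n m k : nat) (a b : int) : bool :=
  if is_bucket m k then (n%:Z %| (a - b))%Z else a == b.

Definition yoke_adj (n m : nat) (u v : seq int) : Prop :=
  exists i : nat, (i <= m)%N /\
    (forall j : nat, (j < m.+2)%N -> j <> i -> j <> i.+1 -> eq_ent n m j (ent u j) (ent v j)) /\
    ((eq_ent n m i (ent u i) (ent v i + 1) /\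
      eq_ent n m i.+1 (ent u i.+1) (ent v i.+1 - 1)) \/
     (eq_ent n m i (ent u i) (ent v i - 1) /\
      eq_ent n m i.+1 (ent u i.+1) (ent v i.+1 + 1))).

Definition norm_ent (n m k : nat) (x : int) : int :=
  if is_bucket m k then (x %% n%:Z)%Z else x.

Definition upd2 (n m i : nat) (v : seq int) (a b : int) : seq int :=
  mkseq (fun j => if j == i then norm_ent n m j a
                  else if j == i.+1 then norm_ent n m j b
                  else ent v j) m.+2.

Definition sL (n m i : nat) (v : seq int) : seq int :=
  upd2 n m i v (ent v i + 1) (ent v i.+1 - 1).
Definition sR (n m i : nat) (v : seq int) : seq int :=
  upd2 n m i v (ent v i - 1) (ent v i.+1 + 1).

Definition s_gen (n m : nat) (i : 'I_m.+1) (v : seq int) : seq int :=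
  if (i == 0 :> nat) then (if ent v 1 == 1 then sL n m 0 v else sR n m 0 v)
  else if (i == m :> nat) then (if ent v m == 0 then sL n m m v else sR n m m v)
  else upd2 n m i v (ent v i.+1) (ent v i).
Arguments s_gen : clear implicits.

(* words in the generators sigma_0..sigma_m; the word [:: i1; ...; ik]
   stands for sigma_{i1} ... sigma_{ik}, acting by s_{i1} o ... o s_{ik} *)
Definition act (n m : nat) (w : seq 'I_m.+1) (v : seq int) : seq int :=
  foldr (s_gen n m) v w.
Arguments act : clear implicits.

Inductive cox_rel (m : nat) : seq 'I_m.+1 -> seq 'I_m.+1 -> Prop :=
| cr_sq i : cox_rel [:: i; i] [::]
| cr_far (i j : 'I_m.+1) : (i.+1 < j)%N \/ (j.+1 < i)%N ->
    cox_rel [:: i; j; i; j] [::]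
| cr_braid (i j : 'I_m.+1) : (1 <= i)%N -> (i <= m - 2)%N -> (j : nat) = i.+1 ->
    cox_rel [:: i; j; i; j; i; j] [::]
| cr_left (i j : 'I_m.+1) : (i : nat) = 0%N -> (j : nat) = 1%N ->
    cox_rel [:: i; j; i; j; i; j; i; j] [::]
| cr_right (i j : 'I_m.+1) : (i : nat) = m.-1 -> (j : nat) = m ->
    cox_rel [:: i; j; i; j; i; j; i; j] [::].

(* the congruence on words generated by the relators: two words are equal
   in C~_m iff they are related by cox_eq (all generators are involutions,
   so the monoid presentation gives the group) *)
Inductive cox_eq (m : nat) : seq 'I_m.+1 -> seq 'I_m.+1 -> Prop :=
| ce_refl w : cox_eq w w
| ce_sym w1 w2 : cox_eq w1 w2 -> cox_eq w2 w1
| ce_trans w1 w2 w3 : cox_eq w1 w2 -> cox_eq w2 w3 -> cox_eq w1 w3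
| ce_ctx p q a b : cox_rel a b -> cox_eq (p ++ a ++ q) (p ++ b ++ q).

From mathcomp Require Import all_boot all_order all_algebra zify.
Import GRing.Theory.
Local Open Scope ring_scope.
Set Implicit Arguments. Unset Strict Implicit. Unset Printing Implicit Defensive.

(* On a vertex, s_k only changes the window (v_k, v_k+1), by an explicit rule
   that is affine because v_1 and v_m are bits: the bucket gains or loses a
   ball according to whether the neighbouring slot is full.  Hence every s_k
   is an involution of the vertex set, and s_k, s_l commute when their
   windows are disjoint.  The other relations involve two neighbouring
   generators, whose product acts on three consecutive entries: in the middle
   as a cyclic rotation (order 3), at either end by moving balls through the
   bucket, where the four shifts of the bucket cancel (order 4).  Finally,
   adjacency at position i in Y_{n,m} says exactly that (v_i, v_i+1) is the
   image of (u_i, u_i+1) under the rule of s_i and differs from it. *)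

Arguments ent : simpl never.

Definition is_bit (x : int) : bool := (x == 0) || (x == 1).

Lemma dvdz_sub_small (d a x : int) : 0 <= a < d -> (d %| x - a)%Z = (a == (x %% d)%Z).
Proof. by move=> ha; rewrite -eqz_mod_dvd (modz_small ha) eq_sym. Qed.

Lemma sumrB_except2 (V : zmodType) (N k : nat) (F G : nat -> V) : (k.+1 < N)%N ->
  (forall j, j != k -> j != k.+1 -> F j = G j) ->
  \sum_(j < N) F j - \sum_(j < N) G j = (F k - G k) + (F k.+1 - G k.+1).
Proof.
move=> hk1 hFG; have hk : (k < N)%N by apply: ltnW.
rewrite -sumrB (bigD1 (Ordinal hk)) // (bigD1 (Ordinal hk1)) -?val_eqE /= ?gtn_eqF //.
rewrite big1 ?addr0 // => j; rewrite -!val_eqE /= => /andP[jk jk1].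
by rewrite hFG ?subrr.
Qed.

Lemma eq_from_ent (u v : seq int) :
  size u = size v -> (forall p, (p < size u)%N -> ent u p = ent v p) -> u = v.
Proof. exact: eq_from_nth. Qed.

Lemma ent_upd2 n m i v a b p : (p < m.+2)%N ->
  ent (upd2 n m i v a b) p =
  if p == i then norm_ent n m p a else if p == i.+1 then norm_ent n m p b else ent v p.
Proof. by move=> hp; rewrite /ent /upd2 nth_mkseq. Qed.

Lemma size_s_gen n m k v : size (s_gen n m k v) = m.+2.
Proof. by rewrite /s_gen /sL /sR; repeat case: ifP => _; rewrite size_mkseq. Qed.

Section Yoke.

Variables n m : nat.
Hypothesis n_gt0 : (0 < n)%N.
Hypothesis m_gt0 : (0 < m)%N.

Local Notation vertex := (yoke_vertex n m).
Local Notation s := (s_gen n m).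

Lemma is_bucket_mid p : (0 < p <= m)%N -> is_bucket m p = false.
Proof. by rewrite /is_bucket; lia. Qed.

Lemma is_bucketS : is_bucket m m.+1.
Proof. by rewrite /is_bucket eqxx orbT. Qed.

Definition yoke_ent (k : nat) (x : int) : bool :=
  if is_bucket m k then (0 <= x) && (x < n%:Z) else is_bit x.

Lemma yoke_vertexE v : vertex v =
  [&& size v == m.+2, [forall j : 'I_m.+2, yoke_ent j (ent v j)]
    & (n%:Z %| \sum_(j < m.+2) ent v j)%Z].
Proof. by []. Qed.

Lemma vertex_size v : vertex v -> size v = m.+2.
Proof. by case/and3P => /eqP. Qed.

Lemma vertex_ent v p : vertex v -> (p < m.+2)%N -> yoke_ent p (ent v p).
Proof.
by rewrite yoke_vertexE => /and3P[_ /forallP hv _] hp; apply: (hv (Ordinal hp)).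
Qed.

Lemma vertex_bucket v p : vertex v -> is_bucket m p -> 0 <= ent v p < n%:Z.
Proof.
move=> hv hb; have hp : (p < m.+2)%N by move: hb; rewrite /is_bucket; lia.
by have := vertex_ent hv hp; rewrite /yoke_ent hb.
Qed.

Lemma vertex_bit v p : vertex v -> (0 < p <= m)%N -> is_bit (ent v p).
Proof.
move=> hv hp; have hp' : (p < m.+2)%N by lia.
by have := vertex_ent hv hp'; rewrite /yoke_ent is_bucket_mid.
Qed.

Definition bucket_add (a d : int) : int := ((a + d) %% n)%Z.

Lemma bucket_addA a d e : bucket_add (bucket_add a d) e = bucket_add a (d + e).
Proof. by rewrite /bucket_add modzDml addrA. Qed.

Lemma bucket_add0 a : 0 <= a < n%:Z -> bucket_add a 0 = a.
Proof. by move=> ha; rewrite /bucket_add addr0 modz_small. Qed.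

Lemma bucket_add_ge0 a d : 0 <= bucket_add a d.
Proof. by rewrite modz_ge0 //; lia. Qed.

Lemma bucket_add_lt a d : bucket_add a d < n%:Z.
Proof. by rewrite ltz_pmod //; lia. Qed.

Lemma bucket_add_dvd a d : (n%:Z %| bucket_add a d - (a + d))%Z.
Proof. by rewrite -eqz_mod_dvd modz_mod. Qed.

(* The rule of s_k on (v_k, v_k+1); it describes s_gen only when v_1 and v_m are bits. *)
Definition s_pair (k : nat) (x y : int) : int * int :=
  if k == 0%N then (bucket_add x (2 * y - 1), 1 - y)
  else if k == m then (1 - x, bucket_add y (2 * x - 1))
  else (y, x).

Lemma ent_s_gen (k : 'I_m.+1) v p : vertex v ->
  ent (s k v) p = if p == k then (s_pair k (ent v k) (ent v k.+1)).1
                  else if p == k.+1 then (s_pair k (ent v k) (ent v k.+1)).2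
                  else ent v p.
Proof.
move=> hv; have [hp|hp] := ltnP p m.+2; last first.
  have [/eqP pk|_] := eqVneq p k; first by have := ltn_ord k; lia.
  have [/eqP pk|_] := eqVneq p k.+1; first by have := ltn_ord k; lia.
  by rewrite /ent !nth_default ?size_s_gen ?vertex_size.
case: k => k hk; rewrite /s_gen /s_pair /=.
have [->|k0] := eqVneq k 0%N; last have [->|km] := eqVneq k m.
- have : is_bit (ent v 1) by apply: vertex_bit; rewrite ?m_gt0.
  by case/orP=> /eqP h1; rewrite h1 /= /sL /sR ent_upd2 // /norm_ent;
    (case: eqP => [->|_]; [| case: eqP => [->|_] //; rewrite is_bucket_mid ?m_gt0 //]);
    rewrite ?h1 /bucket_add; try congr (_ %% _)%Z; lia.
- have : is_bit (ent v m) by apply: vertex_bit; rewrite ?m_gt0 ?leqnn.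
  by case/orP=> /eqP hm; rewrite hm /= /sL /sR ent_upd2 // /norm_ent;
    (case: eqP => [->|_]; [rewrite is_bucket_mid ?m_gt0 ?leqnn //
                          | case: eqP => [->|_] //; rewrite is_bucketS]);
    rewrite ?hm /bucket_add; try congr (_ %% _)%Z; lia.
- by rewrite ent_upd2 // /norm_ent; (case: eqP => [->|_]; [|case: eqP => [->|_] //]);
    rewrite is_bucket_mid //; lia.
Qed.

Lemma ent_s_gen_out (k : 'I_m.+1) v (p : nat) : vertex v -> p != k -> p != k.+1 ->
  ent (s k v) p = ent v p.
Proof. by move=> hv h1 h2; rewrite ent_s_gen // (negbTE h1) (negbTE h2). Qed.

Lemma ent_s_gen_at k v : vertex v -> ent (s k v) k = (s_pair k (ent v k) (ent v k.+1)).1.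
Proof. by move=> hv; rewrite ent_s_gen ?eqxx. Qed.

Lemma ent_s_gen_atS k v : vertex v -> ent (s k v) k.+1 = (s_pair k (ent v k) (ent v k.+1)).2.
Proof. by move=> hv; rewrite ent_s_gen ?eqxx ?gtn_eqF. Qed.

Lemma s_pair_ent k x y : (k <= m)%N -> yoke_ent k x -> yoke_ent k.+1 y ->
  yoke_ent k (s_pair k x y).1 && yoke_ent k.+1 (s_pair k x y).2.
Proof.
move=> hk; rewrite /yoke_ent /s_pair /is_bit.
have [->|k0] := eqVneq k 0%N; last have [->|km] := eqVneq k m.
- rewrite (is_bucket_mid (p := 1)) ?m_gt0 //= => _ hy.
  by rewrite bucket_add_ge0 bucket_add_lt /=; lia.
- rewrite (is_bucket_mid (p := m)) ?m_gt0 ?leqnn // is_bucketS => hx _.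
  by rewrite bucket_add_ge0 bucket_add_lt /=; lia.
- by rewrite !is_bucket_mid /=; lia.
Qed.

Lemma s_pair_sum k x y :
  (n%:Z %| ((s_pair k x y).1 - x) + ((s_pair k x y).2 - y))%Z.
Proof.
rewrite /s_pair; case: ifP => _; last case: ifP => _.
- have -> : bucket_add x (2 * y - 1) - x + (1 - y - y)
          = bucket_add x (2 * y - 1) - (x + (2 * y - 1)) by lia.
  exact: bucket_add_dvd.
- have -> : 1 - x - x + (bucket_add y (2 * x - 1) - y)
          = bucket_add y (2 * x - 1) - (y + (2 * x - 1)) by lia.
  exact: bucket_add_dvd.
- by have -> : y - x + (x - y) = 0 by lia.
Qed.

Lemma s_gen_vertex k v : vertex v -> vertex (s k v).
Proof.
move=> hv; have hk1 : (k.+1 < m.+2)%N by rewrite ltnS.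
have /andP[hk_ent hk1_ent] := s_pair_ent (leq_ord k)
  (vertex_ent hv (ltnW hk1)) (vertex_ent hv hk1).
case/and3P: (hv) => _ _ hsum.
rewrite yoke_vertexE size_s_gen eqxx /=; apply/andP; split.
  apply/forallP=> j; rewrite ent_s_gen //.
  by case: eqP => [->|_] //; case: eqP => [->|_] //; apply: vertex_ent.
rewrite -(subrK (\sum_(j < m.+2) ent v j) (\sum_(j < m.+2) ent (s k v) j)).
rewrite (sumrB_except2 hk1 (fun j => ent_s_gen_out (p := j) hv)) rpredD //.
by rewrite ent_s_gen_at // ent_s_gen_atS // s_pair_sum.
Qed.

Lemma s_pair_invol k x y : yoke_ent k x -> yoke_ent k.+1 y ->
  s_pair k (s_pair k x y).1 (s_pair k x y).2 = (x, y).
Proof.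
rewrite /yoke_ent /s_pair.
have [->|k0] := eqVneq k 0%N; last have [->|km] := eqVneq k m.
- move=> hx _ /=; rewrite bucket_addA subKr.
  have -> : 2 * y - 1 + (2 * (1 - y) - 1) = 0 by lia.
  by rewrite bucket_add0.
- rewrite /= is_bucketS => _ hy; rewrite bucket_addA subKr.
  have -> : 2 * x - 1 + (2 * (1 - x) - 1) = 0 by lia.
  by rewrite bucket_add0.
- by [].
Qed.

Lemma s_gen_invol k v : vertex v -> s k (s k v) = v.
Proof.
move=> hv; have hk1 : (k.+1 < m.+2)%N by rewrite ltnS.
have hsv := s_gen_vertex k hv.
have hpair : (ent (s k (s k v)) k, ent (s k (s k v)) k.+1) = (ent v k, ent v k.+1).
  rewrite (ent_s_gen_at k hsv) (ent_s_gen_atS k hsv) (ent_s_gen_at k hv) (ent_s_gen_atS k hv).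
  by rewrite s_pair_invol //; apply: vertex_ent; rewrite // ltnW.
apply: eq_from_ent => [|p _]; first by rewrite size_s_gen vertex_size.
have [->|pk] := eqVneq p k; first by case: hpair => ->.
have [->|pk1] := eqVneq p k.+1; first by case: hpair => _ ->.
by rewrite !ent_s_gen_out.
Qed.

Lemma s_gen_comm (k l : 'I_m.+1) v : (k.+1 < l)%N \/ (l.+1 < k)%N -> vertex v ->
  s k (s l v) = s l (s k v).
Proof.
move=> hkl hv; apply: eq_from_ent => [|p _]; first by rewrite !size_s_gen.
rewrite !ent_s_gen ?s_gen_vertex //.
by do ![case: eqP => ? //; try (exfalso; lia)].
Qed.

Lemma act_cat u w v : act n m (u ++ w) v = act n m u (act n m w v).
Proof. exact: foldr_cat. Qed.

Lemma act_vertex u v : vertex v -> vertex (act n m u v).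
Proof. by move=> hv; elim: u => //= k u; apply: s_gen_vertex. Qed.

Definition window (p : nat) (v : seq int) : int * int * int := (ent v p, ent v p.+1, ent v p.+2).

Lemma act_window_iter (i j : 'I_m.+1) (p r : nat) (f : int * int * int -> int * int * int) v :
  (p <= i <= p.+1)%N -> (p <= j <= p.+1)%N ->
  (forall w, vertex w -> window p (s i (s j w)) = f (window p w)) ->
  iter r f (window p v) = window p v -> vertex v ->
  act n m (flatten (nseq r [:: i; j])) v = v.
Proof.
move=> hi hj hf hfix hv; set w := act _ _ _ v.
have [hwin hout] : window p w = iter r f (window p v) /\
    forall q, (q < p)%N || (p.+2 < q)%N -> ent w q = ent v q.
  rewrite {}/w; elim: r {hfix} => [|r [IHwin IHout]] //=; split.
    by rewrite hf ?act_vertex // IHwin.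
  by move=> q hq; rewrite !ent_s_gen_out ?s_gen_vertex ?act_vertex ?IHout //; lia.
apply: eq_from_ent => [|q _]; first by rewrite !vertex_size ?act_vertex.
have [/hout //|hq] := boolP ((q < p)%N || (p.+2 < q)%N).
move: hwin; rewrite hfix /window => -[h0 h1 h2].
have : [|| q == p, q == p.+1 | q == p.+2] by lia.
by case/or3P=> /eqP->.
Qed.

Definition rot3 (t : int * int * int) : int * int * int :=
  let: (a, b, c) := t in (c, a, b).

Definition left_corner (t : int * int * int) : int * int * int :=
  let: (a, b, c) := t in (bucket_add a (2 * c - 1), 1 - c, b).

Definition right_corner (t : int * int * int) : int * int * int :=
  let: (a, b, c) := t in (1 - b, a, bucket_add c (2 * b - 1)).

Lemma window_braid (i j : 'I_m.+1) : (0 < i)%N -> (i.+1 < m)%N -> (j : nat) = i.+1 ->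
  forall w, vertex w -> window i (s i (s j w)) = rot3 (window i w).
Proof.
move=> hi0 him hj w hw; rewrite /window !ent_s_gen ?s_gen_vertex // /s_pair hj.
by do ![case: eqP => ? //; try (exfalso; lia)].
Qed.

Lemma window_left_corner (i j : 'I_m.+1) : (1 < m)%N -> (i : nat) = 0%N -> (j : nat) = 1%N ->
  forall w, vertex w -> window 0 (s i (s j w)) = left_corner (window 0 w).
Proof.
move=> hm hi hj w hw; rewrite /window !ent_s_gen ?s_gen_vertex // /s_pair hi hj.
by do ![case: eqP => ? //; try (exfalso; lia)].
Qed.

Lemma window_right_corner (i j : 'I_m.+1) : (1 < m)%N -> (i.+1 = m)%N -> (j : nat) = i.+1 ->
  forall w, vertex w -> window i (s i (s j w)) = right_corner (window i w).
Proof.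
move=> hm hi hj w hw; rewrite /window !ent_s_gen ?s_gen_vertex // /s_pair hj.
by do ![case: eqP => ? //; try (exfalso; lia)].
Qed.

Lemma iter_left_corner a b c : 0 <= a < n%:Z -> iter 4 left_corner (a, b, c) = (a, b, c).
Proof.
move=> ha; rewrite /= !bucket_addA !subKr.
have -> : 2 * c - 1 + (2 * b - 1 + (2 * (1 - c) - 1 + (2 * (1 - b) - 1))) = 0 by lia.
by rewrite bucket_add0.
Qed.

Lemma iter_right_corner a b c : 0 <= c < n%:Z -> iter 4 right_corner (a, b, c) = (a, b, c).
Proof.
move=> hc; rewrite /= !bucket_addA !subKr.
have -> : 2 * b - 1 + (2 * a - 1 + (2 * (1 - b) - 1 + (2 * (1 - a) - 1))) = 0 by lia.
by rewrite bucket_add0.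
Qed.

Lemma act_cox_rel a b v : (1 < m)%N -> cox_rel a b -> vertex v -> act n m a v = act n m b v.
Proof.
move=> hm hab hv; case: hab.
- by move=> k; rewrite /= s_gen_invol.
- by move=> i j hij; rewrite /= s_gen_comm ?s_gen_vertex // !s_gen_invol ?s_gen_vertex.
- move=> i j hi0 him hj.
  by apply: (act_window_iter (r := 3) _ _ (window_braid _ _ hj) erefl hv); lia.
- move=> i j hi hj.
  have hfix : iter 4 left_corner (window 0 v) = window 0 v.
    by rewrite /window iter_left_corner // vertex_bucket.
  by apply: (act_window_iter _ _ (window_left_corner hm hi hj) hfix hv); lia.
- move=> i j hi hj.
  have hfix : iter 4 right_corner (window i v) = window i v.
    by rewrite /window iter_right_corner // vertex_bucket // /is_bucket; lia.
  by apply: (act_window_iter _ _ (window_right_corner hm _ _) hfix hv); lia.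
Qed.

Lemma act_cox_eq w1 w2 : (1 < m)%N -> cox_eq w1 w2 ->
  forall v, vertex v -> act n m w1 v = act n m w2 v.
Proof.
move=> hm; elim=> // [? ? _ IH | ? ? ? _ IH1 _ IH2 | p q a b hab] v hv.
- by rewrite IH.
- by rewrite IH1 // IH2.
- by rewrite !act_cat (act_cox_rel hm hab) ?act_vertex.
Qed.

Lemma dvdz_bucket_add a a' e : 0 <= a' < n%:Z ->
  (n%:Z %| a - (a' + e))%Z = (a' == bucket_add a (- e)).
Proof. by move=> ha'; rewrite /bucket_add -dvdz_sub_small //; congr (_ %| _)%Z; lia. Qed.

Lemma bucket_move a b a' b' : 0 <= a' < n%:Z -> is_bit b -> is_bit b' ->
  [|| (n%:Z %| a - (a' + 1))%Z && (b == b' - 1) | (n%:Z %| a - (a' - 1))%Z && (b == b' + 1)]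
  = (a' == bucket_add a (2 * b - 1)) && (b' == 1 - b).
Proof.
move=> ha' hb hb'; rewrite !dvdz_bucket_add //.
by case/orP: hb => /eqP->; case/orP: hb' => /eqP->; rewrite /= ?andbT ?andbF ?orbF.
Qed.

Lemma pair_adjE k x y x' y' : (k <= m)%N ->
  yoke_ent k x -> yoke_ent k.+1 y -> yoke_ent k x' -> yoke_ent k.+1 y' ->
  [|| eq_ent n m k x (x' + 1) && eq_ent n m k.+1 y (y' - 1)
    | eq_ent n m k x (x' - 1) && eq_ent n m k.+1 y (y' + 1)]
  = ((x', y') == s_pair k x y) && ((x, y) != (x', y')).
Proof.
rewrite /yoke_ent /eq_ent /s_pair /is_bit => hk.
have [->|k0] := eqVneq k 0%N; last have [->|km] := eqVneq k m.
- rewrite (is_bucket_mid (p := 1)) ?m_gt0 //= => _ hy hx' hy'.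
  by rewrite bucket_move // !xpair_eqE; lia.
- rewrite (is_bucket_mid (p := m)) ?m_gt0 ?leqnn // is_bucketS => hx _ hx' hy'.
  by rewrite orbC andbC [in X in _ || X]andbC bucket_move // !xpair_eqE; lia.
- by rewrite !is_bucket_mid ?xpair_eqE; lia.
Qed.

Lemma eq_ent_vertexE u v j : vertex u -> vertex v -> (j < m.+2)%N ->
  eq_ent n m j (ent u j) (ent v j) = (ent u j == ent v j).
Proof.
move=> hu hv hj; rewrite /eq_ent; case: ifP => // hb.
by rewrite dvdz_sub_small ?(vertex_bucket hv) // modz_small ?(vertex_bucket hu) // eq_sym.
Qed.

Lemma eq_vertex_window (k : 'I_m.+1) u v : vertex u -> vertex v ->
  (forall j, (j < m.+2)%N -> j != k -> j != k.+1 -> ent v j = ent u j) ->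
  (u == v) = ((ent u k, ent u k.+1) == (ent v k, ent v k.+1)).
Proof.
move=> hu hv hout; apply/eqP/eqP => [-> // | [hk hk1]].
apply: eq_from_ent => [|p hp]; first by rewrite !vertex_size.
have [->|pk] := eqVneq p k => //; have [->|pk1] := eqVneq p k.+1 => //.
by rewrite hout // -(vertex_size hu).
Qed.

Lemma s_gen_eqP k u v : vertex u -> vertex v ->
  v = s k u <-> (forall j, (j < m.+2)%N -> j != k -> j != k.+1 -> ent v j = ent u j) /\
                (ent v k, ent v k.+1) = s_pair k (ent u k) (ent u k.+1).
Proof.
move=> hu hv; split=> [->|[hout hpair]].
  split=> [j _ h1 h2|]; first by rewrite ent_s_gen_out.
  by rewrite ent_s_gen_at // ent_s_gen_atS // -surjective_pairing.
apply: eq_from_ent => [|p hp]; first by rewrite size_s_gen vertex_size.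
have [->|pk] := eqVneq p k; first by rewrite ent_s_gen_at // -hpair.
have [->|pk1] := eqVneq p k.+1; first by rewrite ent_s_gen_atS // -hpair.
by rewrite ent_s_gen_out // hout // -(vertex_size hv).
Qed.

Lemma yoke_adj_iff u v : vertex u -> vertex v ->
  yoke_adj n m u v <-> u != v /\ exists k : 'I_m.+1, v = s k u.
Proof.
move=> hu hv; split.
  case=> i [hi [hout /(orPP andP andP)]]; set k : 'I_m.+1 := Ordinal (hi : (i < m.+1)%N).
  have hout' j : (j < m.+2)%N -> j != k -> j != k.+1 -> ent v j = ent u j.
    by move=> hj /eqP h1 /eqP h2; apply/esym/eqP; rewrite -eq_ent_vertexE // hout.
  have hk1 : (k.+1 < m.+2)%N := ltn_ord k.
  rewrite (pair_adjE (leq_ord k)) ?vertex_ent ?(ltnW hk1) // => /andP[/eqP hpair hne].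
  split; first by rewrite (eq_vertex_window hu hv hout').
  by exists k; apply/s_gen_eqP.
case=> huv [k /(s_gen_eqP k hu hv)[hout hpair]].
have hk1 : (k.+1 < m.+2)%N := ltn_ord k.
exists k; split; first exact: leq_ord.
split=> [j hj /eqP h1 /eqP h2|]; first by rewrite eq_ent_vertexE // hout.
apply/(orPP andP andP); rewrite (pair_adjE (leq_ord k)) ?vertex_ent ?(ltnW hk1) //.
rewrite -hpair eqxx /=.
by rewrite -(eq_vertex_window hu hv hout).
Qed.

End Yoke.

Theorem corollary3p17 (n m : nat) : (1 <= n)%N -> (2 <= m)%N ->
  (* (1) the s_i act on the vertex set, and the action of words factors
     through the relations of C~_m (well-defined action) *)
  ((forall (i : 'I_m.+1) v, yoke_vertex n m v -> yoke_vertex n m (s_gen n m i v)) /\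
   (forall w1 w2 : seq 'I_m.+1, cox_eq w1 w2 ->
      forall v, yoke_vertex n m v -> act n m w1 v = act n m w2 v)) /\
  (* (2) Y_{n,m} is the Schreier graph w.r.t. sigma_0..sigma_m *)
  (forall u v, yoke_vertex n m u -> yoke_vertex n m v ->
     (yoke_adj n m u v <-> (u != v /\ exists i : 'I_m.+1, v = s_gen n m i u))).
Proof.
move=> n_gt0 m_gt1; have m_gt0 : (0 < m)%N by apply: ltnW.
split; [split|].
- exact: s_gen_vertex.
- by move=> w1 w2; apply: act_cox_eq.
- exact: yoke_adj_iff.
Qed.
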